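(* Let $\mathcal{S}=\{(\bm{x}_i,y_i): i\in[m]\}$ be any sample with $\bm{x}_i\in\mathbb{R}^d$ and $y_i\in\{-1,1\}$, and let $h(\bm{x})=\langle\bm{\theta},\bm{x}\rangle$ be any linear hypothesis ($\bm{\theta}\in\mathbb{R}^d$). Let $l:\mathbb{R}\to\mathbb{R}$ be a loss such that $l_o(x):=(l(x)-l(-x))/2$ is linear. Then $$R_{\mathcal{S},l}(h)=\frac{1}{2}\cdot\frac{1}{m}\sum_{i=1}^m\sum_{\sigma\in\{-1,1\}} l(\sigma h(\bm{x}_i)) + l_o\big(h(\bm{\mu}_{\mathcal{S}})\big).$$
   Context: The empirical $l$-risk is $R_{\mathcal{S},l}(h)=\frac{1}{m}\sum_{i=1}^m l(y_i h(\bm{x}_i))$. The mean operator of $\mathcal{S}$ is $\bm{\mu}_{\mathcal{S}}=\frac{1}{m}\sum_{i=1}^m y_i\bm{x}_i$. *)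

From mathcomp Require Import all_boot all_order all_algebra.
Set Implicit Arguments. Unset Strict Implicit. Unset Printing Implicit Defensive.
Import Order.TTheory GRing.Theory Num.Theory.
Local Open Scope ring_scope.

Definition inner (R : realFieldType) (d : nat) (u v : 'rV[R]_d) : R :=
  \sum_(j < d) u 0 j * v 0 j.

Definition linh (R : realFieldType) (d : nat) (theta : 'rV[R]_d) (x : 'rV[R]_d) : R :=
  inner theta x.

Definition emp_risk (R : realFieldType) (d m : nat) (x : 'I_m -> 'rV[R]_d)
  (y : 'I_m -> R) (l : R -> R) (h : 'rV[R]_d -> R) : R :=
  (m%:R)^-1 * \sum_(i < m) l (y i * h (x i)).

Definition mean_op (R : realFieldType) (d m : nat) (x : 'I_m -> 'rV[R]_d)
  (y : 'I_m -> R) : 'rV[R]_d :=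
  (m%:R)^-1 *: \sum_(i < m) (y i *: x i).

Definition odd_part (R : realFieldType) (l : R -> R) (z : R) : R :=
  (l z - l (- z)) / 2.

Definition is_linear_fun (R : realFieldType) (f : R -> R) : Prop :=
  exists a : R, forall z, f z = a * z.

(** The loss splits into even and odd parts, [l z = (l z + l (- z)) / 2 + l_o z].
    For a label [y = ±1] the even part of [l (y z)] does not depend on [y] and is
    the average of [l] over both signs of [z]. Summing the odd parts over the sample
    and using the linearity of [l_o] and of [h] collapses them into [l_o (h mu_S)]. *)
From mathcomp Require Import all_boot all_order all_algebra.
From mathcomp Require Import ring.
Import Order.TTheory GRing.Theory Num.Theory.
Local Open Scope ring_scope.

Lemma inner_sumr (R : realFieldType) (d : nat) (I : Type) (r : seq I)
    (u : 'rV[R]_d) (v : I -> 'rV[R]_d) :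
  inner u (\sum_(i <- r) v i) = \sum_(i <- r) inner u (v i).
Proof.
rewrite /inner exchange_big /=; apply: eq_bigr => j _.
by rewrite summxE big_distrr.
Qed.

Lemma inner_scaler (R : realFieldType) (d : nat) (a : R) (u v : 'rV[R]_d) :
  inner u (a *: v) = a * inner u v.
Proof.
rewrite /inner big_distrr /=; apply: eq_bigr => j _.
by rewrite mxE mulrCA.
Qed.

Lemma linh_mean_op (R : realFieldType) (d m : nat)
    (x : 'I_m -> 'rV[R]_d) (y : 'I_m -> R) (theta : 'rV[R]_d) :
  linh theta (mean_op x y) = (m%:R)^-1 * \sum_(i < m) y i * linh theta (x i).
Proof.
rewrite /linh /mean_op inner_scaler inner_sumr.
by under eq_bigr => i _ do rewrite inner_scaler.
Qed.

Lemma odd_part_sum (R : realFieldType) (l : R -> R) (I : Type) (r : seq I)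
    (c : R) (f : I -> R) :
  is_linear_fun (odd_part l) ->
  c * \sum_(i <- r) odd_part l (f i) = odd_part l (c * \sum_(i <- r) f i).
Proof.
case=> a la; rewrite la mulrCA; congr (c * _).
by rewrite big_distrr; apply: eq_bigr => i _; rewrite la.
Qed.

Lemma loss_even_odd_split (R : realFieldType) (l : R -> R) (s z : R) :
  s = 1 \/ s = -1 ->
  l (s * z) = 2^-1 * \sum_(sigma <- [:: 1; -1]) l (sigma * z) + odd_part l (s * z).
Proof.
rewrite !big_cons big_nil addr0 mul1r mulN1r /odd_part.
by case=> ->; rewrite ?mul1r ?mulN1r ?opprK; field.
Qed.

Theorem theorem3 (R : realFieldType) (d m : nat)
  (x : 'I_m -> 'rV[R]_d) (y : 'I_m -> R)
  (hy : forall i, y i = 1 \/ y i = -1)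
  (theta : 'rV[R]_d) (l : R -> R)
  (hl : is_linear_fun (odd_part l)) :
  emp_risk x y l (linh theta) =
  2^-1 * ((m%:R)^-1 * \sum_(i < m) \sum_(sigma <- [:: 1; -1]) l (sigma * linh theta (x i)))
  + odd_part l (linh theta (mean_op x y)).
Proof.
rewrite linh_mean_op -odd_part_sum // /emp_risk.
under eq_bigr => i _ do rewrite (@loss_even_odd_split _ l _ _ (hy i)).
rewrite big_split /= -big_distrr /= mulrDr; ring.
Qed.
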